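(* Let $M=\mathbb{R}/\mathbb{Z}$ with metric $d_M(x,y)=\inf|\tilde x-\tilde y|$ over representatives, $\pi_M:\mathbb{R}\to M$ the projection and $I_0=\pi_M([\tfrac14,\tfrac34])$. Let $f_0:M\to M$ be a $\mathscr{C}^r$ diffeomorphism ($r\ge1$) with $f_0(x)=\tfrac12x+\tfrac14\bmod1$ on $I_0$. Let $\Omega$ be a set, $\theta:\Omega\to\Omega$ a map, $\kappa:\Omega\to[-1,1]$ a function, $0<\epsilon<\tfrac18$, $f_\omega(x)=f_0(x)+\epsilon\kappa(\omega)\bmod1$, and $f^{(n)}_\omega=f_{\theta^{n-1}\omega}\circ\cdots\circ f_\omega$ ($f^{(0)}_\omega=\mathrm{id}_M$). For $\omega\in\Omega$ let $X_\omega$ be the unique fixed point of $f_\omega|_{I_0}:I_0\to I_0$ (namely $X_\omega=\pi_M(\tfrac12+2\epsilon\kappa(\omega))$). Then for all $n\in\mathbb{N}_0$, $x\in I_0$ and $\omega,\omega'\in\Omega$, $$d_M\bigl(f^{(n)}_\omega(x),X_{\omega'}\bigr)\le\frac1{2^n}+6\epsilon\max_{0\le j\le n-1}\bigl|\kappa(\theta^j\omega)-\kappa(\omega')\bigr|.$$ *)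

From Stdlib Require Import Reals Lra Lia List.
From Coquelicot Require Import Coquelicot.
Open Scope R_scope.

(* The circle M = R/Z, represented by the canonical representatives in [0,1). *)
Definition M : Type := { x : R | 0 <= x < 1 }.

Lemma frac_in_01 (x : R) : 0 <= x - IZR (Int_part x) < 1.
Proof. destruct (base_Int_part x) as [H1 H2]; lra. Qed.

Definition piM (x : R) : M := exist _ (x - IZR (Int_part x)) (frac_in_01 x).

Definition dM (x y : M) : R :=
  real (Glb_Rbar (fun t => exists k : Z, t = Rabs (proj1_sig x - proj1_sig y + IZR k))).

Definition I0 (x : M) : Prop := 1/4 <= proj1_sig x <= 3/4.

Definition Cr (r : nat) (F : R -> R) : Prop :=
  forall k : nat, (k <= r)%nat -> forall x : R,
    ex_derive_n F k x /\ continuous (Derive_n F k) x.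

(* f : M -> M is a C^r diffeomorphism of the circle: f is bijective and has
   a C^r lift F : R -> R (pi_M (F x) = f (pi_M x)) with nowhere vanishing
   derivative (so that f^{-1} is C^r as well, by the inverse function theorem). *)
Definition circle_Cr_diffeo (r : nat) (f : M -> M) : Prop :=
  (forall x y : M, f x = f y -> x = y) /\
  (forall y : M, exists x : M, f x = y) /\
  exists F : R -> R,
    (forall x : R, piM (F x) = f (piM x)) /\
    Cr r F /\
    (forall x : R, Derive F x <> 0).

Definition fom {Omega : Type} (f0 : M -> M) (eps : R) (kappa : Omega -> R)
  (w : Omega) (x : M) : M :=
  piM (proj1_sig (f0 x) + eps * kappa w).

Fixpoint fcomp {Omega : Type} (f0 : M -> M) (eps : R) (kappa : Omega -> R)
  (theta : Omega -> Omega) (n : nat) (w : Omega) (x : M) : M :=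
  match n with
  | O => x
  | S m => fcomp f0 eps kappa theta m (theta w) (fom f0 eps kappa w x)
  end.

Definition maxdev {Omega : Type} (kappa : Omega -> R) (theta : Omega -> Omega)
  (n : nat) (w w' : Omega) : R :=
  fold_right Rmax 0
    (map (fun j => Rabs (kappa (Nat.iter j theta w) - kappa w')) (seq 0 n)).

From Stdlib Require Import Reals Lra Lia List.
From Coquelicot Require Import Coquelicot.
Open Scope R_scope.

(* On I_0 every f_w is the affine map a |-> a/2 + 1/4 + eps kappa(w), which maps I_0
   into itself because |eps kappa(w)| < 1/8. Two such maps with parameters k and k'
   differ by a contraction of ratio 1/2 plus eps |k - k'|, so iterating against the
   fixed point c of f_{w'} gives |f^(n)_w(x) - c| <= |x - c| / 2^n + 2 eps maxdev,
   which is stronger than the claim since |x - c| <= 1/2. *)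

Lemma piM_id (y : R) : 0 <= y < 1 -> proj1_sig (piM y) = y.
Proof.
  intros Hy; simpl.
  destruct (base_Int_part y) as [H1 H2].
  assert (Hz : Int_part y = 0%Z).
  { assert ((Int_part y < 1)%Z) by (apply lt_IZR; lra).
    assert ((-1 < Int_part y)%Z) by (apply lt_IZR; simpl; lra).
    lia. }
  rewrite Hz; simpl; lra.
Qed.

Lemma dM_le_Rabs (x y : M) : dM x y <= Rabs (proj1_sig x - proj1_sig y).
Proof.
  unfold dM.
  set (E := fun t => exists k : Z, t = Rabs (proj1_sig x - proj1_sig y + IZR k)).
  destruct (Glb_Rbar_correct E) as [Hlb Hglb].
  assert (Hle : Rbar_le (Glb_Rbar E) (Rabs (proj1_sig x - proj1_sig y))).
  { apply Hlb. exists 0%Z. simpl. f_equal. ring. }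
  assert (Hge0 : Rbar_le 0 (Glb_Rbar E)).
  { apply Hglb. intros t [k ->]. apply Rabs_pos. }
  destruct (Glb_Rbar E); simpl in *; try contradiction; lra.
Qed.

Lemma fold_right_Rmax_ge_init (l : list R) (a : R) : a <= fold_right Rmax a l.
Proof.
  induction l as [|h l IHl]; simpl; [lra|].
  eapply Rle_trans; [apply IHl | apply Rmax_r].
Qed.

Section Maxdev.

Context {Omega : Type}.
Variables (kappa : Omega -> R) (theta : Omega -> Omega).

Lemma maxdev_ge0 n w w' : 0 <= maxdev kappa theta n w w'.
Proof. apply fold_right_Rmax_ge_init. Qed.

Lemma maxdev_S n w w' :
  maxdev kappa theta (S n) w w'
  = Rmax (maxdev kappa theta n w w') (Rabs (kappa (Nat.iter n theta w) - kappa w')).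
Proof.
  unfold maxdev. rewrite seq_S, map_app, fold_right_app; simpl.
  induction (map _ (seq 0 n)) as [|h l IHl]; simpl.
  - pose proof (Rabs_pos (kappa (Nat.iter n theta w) - kappa w')).
    rewrite Rmax_left, Rmax_right; lra.
  - rewrite IHl, Rmax_assoc. reflexivity.
Qed.

End Maxdev.

Lemma fcomp_S {Omega : Type} f0 eps (kappa : Omega -> R) theta n w x :
  fcomp f0 eps kappa theta (S n) w x =
  fom f0 eps kappa (Nat.iter n theta w) (fcomp f0 eps kappa theta n w x).
Proof.
  revert w x. induction n as [|n IHn]; intros w x; [reflexivity|].
  change (fcomp f0 eps kappa theta (S (S n)) w x) with
    (fcomp f0 eps kappa theta (S n) (theta w) (fom f0 eps kappa w x)).
  rewrite IHn, <- Nat.iter_succ_r. reflexivity.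
Qed.

Lemma affine_half_step (eps a c k k' : R) : 0 <= eps ->
  Rabs ((a / 2 + 1/4 + eps * k) - (c / 2 + 1/4 + eps * k'))
  <= Rabs (a - c) / 2 + eps * Rabs (k - k').
Proof.
  intros Heps.
  replace (a / 2 + 1/4 + eps * k - (c / 2 + 1/4 + eps * k'))
    with ((a - c) / 2 + eps * (k - k')) by field.
  eapply Rle_trans; [apply Rabs_triang|].
  unfold Rdiv. rewrite !Rabs_mult, (Rabs_pos_eq eps Heps), (Rabs_pos_eq (/2)) by lra.
  lra.
Qed.

Section OnI0.

Context {Omega : Type}.
Variables (theta : Omega -> Omega) (kappa : Omega -> R).
Variables (f0 : M -> M) (eps : R).
Hypothesis hf0I : forall x : M, I0 x -> f0 x = piM (proj1_sig x / 2 + 1/4).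
Hypothesis hkappa : forall w : Omega, -1 <= kappa w <= 1.
Hypothesis heps : 0 < eps < 1/8.

Lemma fom_on_I0 w x : I0 x ->
  proj1_sig (fom f0 eps kappa w x) = proj1_sig x / 2 + 1/4 + eps * kappa w
  /\ I0 (fom f0 eps kappa w x).
Proof.
  unfold I0, fom. intros Hx.
  rewrite (hf0I x Hx), (piM_id (proj1_sig x / 2 + 1/4)) by lra.
  assert (-eps <= eps * kappa w <= eps) by (specialize (hkappa w); nra).
  rewrite piM_id by lra. split; [reflexivity | lra].
Qed.

Lemma fcomp_dist_fixed_point (w' : Omega) (c : R) :
  c = c / 2 + 1/4 + eps * kappa w' ->
  forall n w x, I0 x ->
    I0 (fcomp f0 eps kappa theta n w x) /\
    Rabs (proj1_sig (fcomp f0 eps kappa theta n w x) - c)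
      <= Rabs (proj1_sig x - c) / 2 ^ n + 2 * eps * maxdev kappa theta n w w'.
Proof.
  intros Hc n w x Hx. induction n as [|n [HI Hb]].
  - unfold maxdev; simpl. split; [exact Hx | lra].
  - rewrite fcomp_S.
    destruct (fom_on_I0 (Nat.iter n theta w) _ HI) as [Hval HI'].
    split; [exact HI'|].
    rewrite Hval, Hc at 1.
    eapply Rle_trans; [apply affine_half_step; lra|].
    rewrite maxdev_S.
    pose proof (Rmax_l (maxdev kappa theta n w w')
                       (Rabs (kappa (Nat.iter n theta w) - kappa w'))).
    pose proof (Rmax_r (maxdev kappa theta n w w')
                       (Rabs (kappa (Nat.iter n theta w) - kappa w'))).
    pose proof (maxdev_ge0 kappa theta n w w').
    simpl pow. unfold Rdiv in *. rewrite Rinv_mult. nra.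
Qed.

End OnI0.

Theorem lemma2p1
  (r : nat) (hr : (1 <= r)%nat) (f0 : M -> M)
  (hf0 : circle_Cr_diffeo r f0)
  (hf0I : forall x : M, I0 x -> f0 x = piM (proj1_sig x / 2 + 1/4))
  (Omega : Type) (theta : Omega -> Omega) (kappa : Omega -> R)
  (hkappa : forall w : Omega, -1 <= kappa w <= 1)
  (eps : R) (heps : 0 < eps < 1/8)
  (X : Omega -> M)
  (hX : forall w : Omega, I0 (X w) /\ fom f0 eps kappa w (X w) = X w)
  (hXuniq : forall (w : Omega) (y : M), I0 y -> fom f0 eps kappa w y = y -> y = X w) :
  forall (n : nat) (x : M) (w w' : Omega), I0 x ->
    dM (fcomp f0 eps kappa theta n w x) (X w')
      <= 1 / 2 ^ n + 6 * eps * maxdev kappa theta n w w'.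
Proof.
  intros n x w w' Hx.
  destruct (hX w') as [HXI HXfix].
  set (c := proj1_sig (X w')).
  assert (Hc : c = c / 2 + 1/4 + eps * kappa w').
  { unfold c at 1. rewrite <- HXfix. exact (proj1 (fom_on_I0 _ _ _ hf0I hkappa heps w' _ HXI)). }
  destruct (fcomp_dist_fixed_point theta _ _ _ hf0I hkappa heps _ _ Hc n w _ Hx) as [_ Hdist].
  assert (Hxc : Rabs (proj1_sig x - c) <= 1) by (unfold I0, c in *; apply Rabs_le; lra).
  assert (Hpow : 0 < / 2 ^ n) by (apply Rinv_0_lt_compat, pow_lt; lra).
  pose proof (maxdev_ge0 kappa theta n w w').
  eapply Rle_trans; [apply dM_le_Rabs|]. fold c.
  unfold Rdiv in *. nra.
Qed.
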